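(* Let $m,q\ge1$ and let $r=(r_1,\dots,r_q)$ with $r_1,\dots,r_q$ i.i.d. $\mathrm{Exp}(1)$. For any distributions $\mu_1,\dots,\mu_m\in\Delta_q$, $$\mathbb P_r\big[\exists i,j\in[m]:\ \mathrm{GumbelTrick}(\mu_i,r)\ne\mathrm{GumbelTrick}(\mu_j,r)\big]\le\frac{\sum_{x\in[q]}\big(\max_{i\in[m]}\mu_i(x)-\min_{i\in[m]}\mu_i(x)\big)}{\sum_{x\in[q]}\max_{i\in[m]}\mu_i(x)}.$$
   Context: $\Delta_q$ is the probability simplex on $[q]$. $\mathrm{GumbelTrick}(\nu,r)$ outputs $\arg\min\{r_x/\nu(x): x\in[q]\}$ (with $r_x/0=+\infty$; ties occur with probability zero). *)

From HB Require Import structures.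
From mathcomp Require Import all_boot all_order all_algebra.
From mathcomp Require Import all_classical all_reals all_analysis.
Set Implicit Arguments. Unset Strict Implicit. Unset Printing Implicit Defensive.
Import Order.TTheory GRing.Theory Num.Theory.
Local Open Scope classical_set_scope.
Local Open Scope ring_scope.

Definition in_simplex (R : realType) (T : finType) (nu : T -> R) : Prop :=
  (forall x, 0 <= nu x) /\ \sum_(x : T) nu x = 1.

Definition gumbel_key (R : realType) (T : finType) (nu r : T -> R) (x : T)
  : \bar R :=
  if nu x == 0 then +oo%E else (r x / nu x)%:E.

(* GumbelTrick(nu, r) = argmin_x r_x / nu(x); ties (a probability-zero event)
   are resolved by an arbitrary fixed choice ([pick]).  For nonempty T the
   result is always [Some _]. *)
Definition GumbelTrick (R : realType) (T : finType) (nu r : T -> R) : option T :=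
  [pick x | [forall y, (gumbel_key nu r x <= gumbel_key nu r y)%E]].

Definition mutually_independent d (T : measurableType d) (R : realType)
  (P : probability T R) (I : finType) (X : I -> T -> R) : Prop :=
  forall (J : {set I}) (B : I -> set R),
    (forall i, measurable (B i)) ->
    P (\bigcap_(i in [set` J]) (X i @^-1` B i)) =
    (\prod_(i in J) P (X i @^-1` B i))%E.

Definition has_exponential_law d (T : measurableType d) (R : realType)
  (P : probability T R) (rate : R) (X : T -> R) : Prop :=
  measurable_fun setT X /\
  forall A : set R, measurable A -> P (X @^-1` A) = exponential_prob rate A.

From HB Require Import structures.
From mathcomp Require Import all_boot all_order all_algebra.
From mathcomp Require Import all_classical all_reals all_analysis.
From mathcomp Require Import ring lra measurable_realfun.
Import Order.TTheory GRing.Theory Num.Theory.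
Local Open Scope classical_set_scope.
Local Open Scope ring_scope.

(* Discretise time with a mesh [de].  Let A and M be the pointwise minimum and
   maximum of the mu_i.  For a coordinate x and a step k, consider the event that
   r_x / A(x) lies in (k de, (k+1) de] while r_y / M(y) > (k+1) de for all y <> x.
   On it the key r_z / mu_i(z) of every mu_i is minimised at x, so all the
   Gumbel tricks agree.  These events are pairwise disjoint and, by independence,
   have explicit probabilities; summing the resulting geometric series over k,
   their union for a fixed x has probability close to
   A(x) / (A(x) + sum_{y <> x} M(y)) >= A(x) / sum_y M(y) once [de] is small and
   enough steps are taken.  Hence the Gumbel tricks agree with probability at
   least sum_x A(x) / sum_x M(x). *)

Section race_sum.
Context {R : realType}.
Implicit Types (a c de eps : R) (K : nat).

Lemma onem_expRN_le a : 1 - expR (- a) <= a.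
Proof. by have := expR_ge1Dx (- a); lra. Qed.

Lemma mul_expRN_le_onem a : 0 <= a -> a * expR (- a) <= 1 - expR (- a).
Proof.
move=> a0; have := ler_wpM2l (ltW (expR_gt0 (- a))) (expR_ge1Dx a).
by rewrite -expRD addNr expR0 mulrDr mulr1 mulrC; lra.
Qed.

(* The probability that an Exp(a) clock rings in a window (k de, (k+1) de],
   k < K, while an independent Exp(c) clock has not rung by the end of it. *)
Definition race_sum a c de K : R :=
  \sum_(k < K) (expR (- (a * (k%:R * de))) - expR (- (a * (k.+1%:R * de))))
               * expR (- (c * (k.+1%:R * de))).

Lemma race_sumE a c de K :
  race_sum a c de K = (expR (- (c * de)) - expR (- ((a + c) * de)))
                      * \sum_(k < K) expR (- ((a + c) * de)) ^+ k.
Proof.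
rewrite mulr_sumr; apply: eq_bigr => k _.
rewrite -expRM_natl mulrBl [RHS]mulrBl -!expRD -natr1; congr (expR _ - expR _); ring.
Qed.

(* The sum is rho (1 - u^K) with rho = C / (1 - u) in [0, 1], and
   rho >= a u / (a + c) since C >= a de u and 1 - u <= (a + c) de. *)
Lemma race_sum_ge a c de K : 0 <= a -> 0 <= c -> 0 < de -> 0 < a + c ->
  a / (a + c) * expR (- ((a + c) * de)) - expR (- ((a + c) * de)) ^+ K
  <= race_sum a c de K.
Proof.
move=> a0 c0 de0 b0; rewrite race_sumE; set u := expR (- ((a + c) * de)).
have u1 : u < 1 by rewrite expR_lt1 oppr_lt0 mulr_gt0.
have u0 : 0 < u := expR_gt0 _.
have onemu0 : 0 < 1 - u by lra.
have geoE : \sum_(k < K) u ^+ k = (1 - u ^+ K) / (1 - u).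
  apply: (@mulIf _ (1 - u)); first by rewrite gt_eqF.
  by rewrite mulfVK ?gt_eqF //; apply: oppr_inj; rewrite -mulrN !opprB subrX1 mulrC.
set C := expR (- (c * de)) - u.
have C_le : C <= 1 - u.
  by rewrite /C lerB // expR_le1 oppr_le0 mulr_ge0 // ltW.
have C_ge : a * de * u <= C.
  have -> : C = expR (- (c * de)) * (1 - expR (- (a * de))).
    by rewrite /C /u mulrBr mulr1 -expRD; congr (_ - expR _); ring.
  have -> : u = expR (- (c * de)) * expR (- (a * de)).
    by rewrite /u -expRD; congr expR; ring.
  rewrite mulrCA; apply: ler_wpM2l; first exact/ltW/expR_gt0.
  by apply: mul_expRN_le_onem; rewrite mulr_ge0 // ltW.
have C0 : 0 <= C by rewrite (le_trans _ C_ge) // !mulr_ge0 // ltW.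
have rho_ge : a / (a + c) * u <= C / (1 - u).
  have bde0 : 0 < (a + c) * de by rewrite mulr_gt0.
  rewrite (_ : a / (a + c) * u = a * de * u / ((a + c) * de)); last first.
    by field; rewrite !gt_eqF.
  rewrite ler_pdivrMr //; apply: (le_trans C_ge).
  rewrite -{1}[C](divfK (lt0r_neq0 onemu0)); apply: ler_wpM2l.
    exact: divr_ge0 C0 (ltW onemu0).
  exact: onem_expRN_le.
have rho_le : C / (1 - u) <= 1 by rewrite ler_pdivrMr // mul1r.
have uK0 : 0 <= u ^+ K := exprn_ge0 _ (ltW u0).
rewrite geoE mulrA mulrAC mulrBr mulr1.
have : C / (1 - u) * u ^+ K <= u ^+ K by rewrite ler_piMl.
lra.
Qed.

Lemma exists_expr_le (u eps : R) : 0 <= u < 1 -> 0 < eps -> exists K, u ^+ K <= eps.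
Proof.
move=> /andP[u0 u1] eps0; have := @cvg_expr R u; rewrite ger0_norm // => /(_ u1).
move=> /cvgr0_norm_lt/(_ _ eps0) [N _ HN]; exists N.
by rewrite -(ger0_norm (exprn_ge0 N u0)) ltW // HN /=.
Qed.

Lemma race_sum_approx a c eps : 0 <= a -> 0 <= c -> 0 < eps ->
  exists de K, 0 < de /\ a / (a + c) - eps <= race_sum a c de K.
Proof.
move=> a0 c0 eps0; have [-> | a_neq0] := eqVneq a 0.
  by exists 1, 0%N; rewrite /race_sum big_ord0 mul0r; split; lra.
have b0 : 0 < a + c by rewrite ltr_wpDr // lt0r a_neq0.
pose de := eps / (2 * (a + c)).
have de0 : 0 < de by rewrite divr_gt0 // mulr_gt0.
set u := expR (- ((a + c) * de)).
have u_ge : 1 - eps / 2 <= u.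
  rewrite /u; have -> : (a + c) * de = eps / 2 by rewrite /de; field; rewrite gt_eqF.
  by have := onem_expRN_le (eps / 2); lra.
have [K uK] : exists K, u ^+ K <= eps / 2.
  by apply: exists_expr_le; [rewrite expR_ge0 expR_lt1 oppr_lt0 mulr_gt0 | lra].
exists de, K; split => //; apply: (le_trans _ (race_sum_ge _ _ _ K a0 c0 de0 b0)).
have ab1 : a / (a + c) <= 1 by rewrite ler_pdivrMr // mul1r lerDl.
have : a / (a + c) * (1 - u) <= 1 - u.
  by rewrite ler_piMl // subr_ge0 expR_le1 oppr_le0 mulr_ge0 // ltW.
rewrite -/u; lra.
Qed.

End race_sum.

Section exponential_law.
Context {R : realType} {d : measure_display} {Omega : measurableType d}.
Variables (P : probability Omega R) (X : Omega -> R).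
Hypothesis X_exp : has_exponential_law P 1 X.

Let mX A : measurable A -> measurable (X @^-1` A).
Proof. by move=> mA; rewrite -[X @^-1` A]setTI; exact: X_exp.1. Qed.

Let prob_itv_split (a x y : itv_bound R) : (a <= x)%O -> (x <= y)%O ->
  P (X @^-1` [set` Interval a y]) =
  (P (X @^-1` [set` Interval a x]) + P (X @^-1` [set` Interval x y]))%E.
Proof.
move=> ax xy; rewrite (itv_bndbnd_setU ax xy) preimage_setU.
apply: measureU; [by apply: mX; exact: measurable_itv..|].
by rewrite -preimage_setI -set_itvI /Order.meet /= (join_r ax) (meet_l xy) set_itvxx.
Qed.

Lemma exponential_cdf t : 0 <= t -> P (X @^-1` `]-oo, t]) = (1 - expR (- t))%:E.
Proof.
have cdf_gt0 u : 0 < u -> P (X @^-1` `]-oo, u]) = (1 - expR (- u))%:E.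
  move=> u0; rewrite (@prob_itv_split _ (BLeft 0)) ?bnd_simp ?ltW //.
  have [_ law] := X_exp.
  rewrite !law // exponential_prob_itv0c // mulN1r EFinB.
  rewrite /exponential_prob integral0_eq ?add0e // => z /=.
  by rewrite in_itv /= => z0; rewrite lt0_exponential_pdf.
rewrite le_eqVlt => /predU1P[<- | ]; last exact: cdf_gt0.
rewrite oppr0 expR0 subrr; apply/eqP; rewrite eq_le measure_ge0 andbT.
apply/lee_addgt0Pr => e e0; rewrite add0e.
apply: (@le_trans _ _ (P (X @^-1` `]-oo, e]))).
  apply: le_measure; rewrite ?inE; try by apply: mX; exact: measurable_itv.
  by move=> z /=; rewrite !in_itv /= => /le_trans; apply; exact: ltW.
by rewrite cdf_gt0 // lee_fin onem_expRN_le.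
Qed.

Lemma exponential_tail t : 0 <= t -> P (X @^-1` `]t, +oo[) = (expR (- t))%:E.
Proof.
move=> t0; have -> : X @^-1` `]t, +oo[ = ~` (X @^-1` `]-oo, t]).
  by rewrite preimage_setC setCitvl.
rewrite probability_setC; last first.
  by apply: mX; exact: measurable_itv.
by rewrite exponential_cdf // -EFinB opprB addrC subrK.
Qed.

Lemma exponential_itv s t : 0 <= s <= t ->
  P (X @^-1` `]s, t]) = (expR (- s) - expR (- t))%:E.
Proof.
move=> /andP[s0 st]; have := @prob_itv_split -oo%O (BRight s) (BRight t).
rewrite !bnd_simp => /(_ isT st); rewrite !exponential_cdf ?(le_trans s0) //.
move=> split_t; have fin : P (X @^-1` `]s, t]) \is a fin_num.
  by rewrite fin_num_measure //; apply: mX; exact: measurable_itv.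
rewrite -(fineK fin) -EFinD in split_t *; have := EFin_inj split_t.
by move=> ?; congr EFin; lra.
Qed.

End exponential_law.

Section gumbel_trick.
Context {R : realType} {T : finType}.
Implicit Types (nu r M : T -> R) (x : T).

Lemma GumbelTrick_strict_min nu r x :
  (forall y, y != x -> (gumbel_key nu r x < gumbel_key nu r y)%E) ->
  GumbelTrick nu r = Some x.
Proof.
move=> key_lt; rewrite /GumbelTrick; case: pickP => [z /forallP z_min | no_min].
  have [-> // | zx] := eqVneq z x.
  by have := z_min x; rewrite leNgt key_lt.
move: (no_min x) => /negbT/negP[]; apply/forallP => y.
by case: (eqVneq y x) => [-> | yx]; [exact: lexx | exact/ltW/key_lt].
Qed.

Lemma GumbelTrick_race nu r M x (a t : R) :
  0 < a <= nu x -> (forall y, 0 <= nu y <= M y) -> 0 <= t -> r x <= a * t ->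
  (forall y, y != x -> M y * t < r y) -> GumbelTrick nu r = Some x.
Proof.
move=> /andP[a0 a_nu] nu_M t0 rx_le ry_gt; apply: GumbelTrick_strict_min => y yx.
have nux0 : 0 < nu x := lt_le_trans a0 a_nu.
have [nuy0 nuyM] := andP (nu_M y).
rewrite /gumbel_key (negbTE (lt0r_neq0 nux0)).
have [_ | nuy_neq0] := eqVneq (nu y) 0; first exact: ltey.
have key_x : r x / nu x <= t.
  by rewrite ler_pdivrMr // mulrC (le_trans rx_le) //; exact: ler_wpM2r.
rewrite lte_fin (le_lt_trans key_x) // ltr_pdivlMr ?lt0r ?nuy_neq0 //.
by rewrite mulrC (le_lt_trans _ (ry_gt y yx)) //; exact: ler_wpM2r.
Qed.

End gumbel_trick.

Section measurability.
Context {d : measure_display} {Omega : measurableType d} {R : realType}.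

Lemma measurable_ffun_pred {K : finType} (E : K -> set Omega)
    (Phi : {ffun K -> bool} -> Prop) :
  (forall k, measurable (E k)) ->
  measurable [set w | Phi [ffun k => `[< E k w >]]].
Proof.
move=> mE.
have -> : [set w | Phi [ffun k => `[< E k w >]]] =
    \bigcup_(v in [set v | Phi v])
      \bigcap_(k in [set: K]) (if v k then E k else ~` E k).
  apply/seteqP; split => w /=.
    move=> Phi_w; exists [ffun k => `[< E k w >]] => // k _.
    by rewrite ffunE; case: asboolP.
  move=> [v Phi_v vw]; suff -> : [ffun k => `[< E k w >]] = v by [].
  apply/ffunP => k; rewrite ffunE; have := vw k I.
  by case: (v k) => /=; case: asboolP.
apply: fin_bigcup_measurable; first exact: finite_finset.
move=> v _; apply: fin_bigcap_measurable; first exact: finite_finset.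
by move=> k _; case: (v k) => //; exact: measurableC.
Qed.

Context {T : finType} {r : T -> Omega -> R}.
Hypothesis mr : forall x, measurable_fun setT (r x).

Lemma measurable_gumbel_key_le (nu : T -> R) x y :
  measurable [set w | (gumbel_key nu (r^~ w) x <= gumbel_key nu (r^~ w) y)%E].
Proof.
have mkey z : measurable_fun setT (fun w => gumbel_key nu (r^~ w) z).
  rewrite /gumbel_key; case: (nu z == 0); first exact: measurable_cst.
  by apply/measurable_EFinP; apply: measurable_funM => //; exact: measurable_cst.
by rewrite -[X in measurable X]setTI; exact: measurable_lee.
Qed.

Lemma measurable_GumbelTrick_disagree {I : finType} (mu : I -> T -> R) :
  measurable [set w | exists i j,
    GumbelTrick (mu i) (r^~ w) <> GumbelTrick (mu j) (r^~ w)].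
Proof.
(* The Gumbel tricks only depend on finitely many comparisons between keys. *)
pose E (k : I * (T * T)) : set Omega :=
  [set w | (gumbel_key (mu k.1) (r^~ w) k.2.1 <= gumbel_key (mu k.1) (r^~ w) k.2.2)%E].
pose pick_min (v : {ffun I * (T * T) -> bool}) i :=
  [pick x | [forall y, v (i, (x, y))]].
pose Phi v := exists i j, pick_min v i <> pick_min v j.
have pick_minE w i :
    pick_min [ffun k => `[< E k w >]] i = GumbelTrick (mu i) (r^~ w).
  by apply: eq_pick => x /=; apply: eq_forallb => y; rewrite ffunE asboolb.
have -> : [set w | exists i j,
    GumbelTrick (mu i) (r^~ w) <> GumbelTrick (mu j) (r^~ w)] =
    [set w | Phi [ffun k => `[< E k w >]]].
  by apply/seteqP; split => w /= [i [j ij]]; exists i, j; rewrite ?pick_minE in ij *.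
apply: measurable_ffun_pred => k; exact: measurable_gumbel_key_le.
Qed.

End measurability.

Section race.
Context {R : realType} {d : measure_display} {Omega : measurableType d}.
Context {P : probability Omega R} {q : nat} {r : 'I_q -> Omega -> R}.
Hypothesis r_exp : forall x, has_exponential_law P 1 (r x).
Hypothesis r_indep : mutually_independent P r.
Context {a M : 'I_q -> R}.
Hypothesis a_ge0 : forall x, 0 <= a x.
Hypothesis a_le_M : forall x, a x <= M x.

Let M_ge0 x : 0 <= M x := le_trans (a_ge0 x) (a_le_M x).
Let mr x : measurable_fun setT (r x) := (r_exp x).1.

Definition race_window x (s t : R) y : set R :=
  if y == x then `]a x * s, a x * t]%classic else `]M y * t, +oo[%classic.

Definition race_event x s t : set Omega :=
  \bigcap_(y in [set` [set: 'I_q]%SET]) r y @^-1` race_window x s t y.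

Lemma race_eventP x s t w : race_event x s t w <->
  a x * s < r x w <= a x * t /\ forall y, y != x -> M y * t < r y w.
Proof.
have in_window y : race_event x s t w -> race_window x s t y (r y w).
  by move=> /(_ y); apply; rewrite /= inE.
split => [ev | [rx ry] y _].
  have := in_window x ev; rewrite /race_window eqxx /= in_itv /= => ->.
  split => // y yx; have := in_window y ev.
  by rewrite /race_window (negbTE yx) /= in_itv /= andbT.
rewrite /race_window; have [-> | yx] := eqVneq y x; first by rewrite /= in_itv.
by rewrite /= in_itv /= andbT ry.
Qed.

Lemma measurable_race_event x s t : measurable (race_event x s t).
Proof.
apply: fin_bigcap_measurable; first exact: finite_finset.
move=> y _; rewrite -[_ @^-1` _]setTI; apply: mr => //.
by rewrite /race_window; case: (y == x); exact: measurable_itv.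
Qed.

Lemma prob_race_event x s t : 0 <= s <= t ->
  P (race_event x s t) = ((expR (- (a x * s)) - expR (- (a x * t)))
                          * expR (- ((\sum_(y < q | y != x) M y) * t)))%:E.
Proof.
move=> /andP[s0 st]; have t0 := le_trans s0 st.
rewrite /race_event r_indep => [|y]; last first.
  by rewrite /race_window; case: (y == x); exact: measurable_itv.
rewrite (bigD1 x) ?inE //= {1}/race_window eqxx exponential_itv ?mulr_ge0 ?ler_wpM2l //.
rewrite EFinM mulr_suml -sumrN expR_sum -prodEFin; congr (_ * _)%E.
apply: eq_big => [y | y /andP[_ yx]]; first by rewrite inE.
by rewrite /race_window (negbTE yx) exponential_tail // mulr_ge0.
Qed.

Lemma race_event_gt0 {x s t w} : race_event x s t w -> 0 < a x.
Proof.
move=> /race_eventP[/andP[lo hi] _]; rewrite lt0r a_ge0 andbT.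
by apply: contraTneq (lt_le_trans lo hi) => ->; rewrite !mul0r ltxx.
Qed.

Lemma GumbelTrick_race_event {x s t w} (nu : 'I_q -> R) : 0 <= s ->
  (forall y, a y <= nu y <= M y) -> race_event x s t w ->
  GumbelTrick nu (r^~ w) = Some x.
Proof.
move=> s0 nu_env ev; have ax0 := race_event_gt0 ev.
move: ev => /race_eventP[/andP[lo hi] ry].
have st : s < t by rewrite -(ltr_pM2l ax0) (lt_le_trans lo hi).
apply: (@GumbelTrick_race _ _ nu (r^~ w) M x (a x) t) => //.
- by rewrite ax0; have /andP[] := nu_env x.
- by move=> y; have /andP[ay ->] := nu_env y; rewrite (le_trans (a_ge0 y)).
- exact: le_trans s0 (ltW st).
Qed.

Definition race_steps x (de : R) (K : nat) : set Omega :=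
  \big[setU/set0]_(k < K) race_event x (k%:R * de) (k.+1%:R * de).

Lemma prob_race_steps x de K : 0 < de ->
  P (race_steps x de K) = (race_sum (a x) (\sum_(y < q | y != x) M y) de K)%:E.
Proof.
move=> de0; rewrite measure_bigsetU_ord => [||k j _ _ [w [wk wj]]].
- rewrite /race_sum -sumEFin; apply: eq_bigr => k _.
  apply: prob_race_event; have de_ge0 := ltW de0.
  by rewrite mulr_ge0 //= ler_wpM2r // ler_nat.
- by move=> k; exact: measurable_race_event.
have ax0 := race_event_gt0 wk; apply: val_inj; apply/eqP.
move: wk wj => /race_eventP[/andP[lok hik] _] /race_eventP[/andP[loj hij] _].
have step_lt (i l : nat) : a x * (i%:R * de) < a x * (l%:R * de) -> (i < l)%N.
  by rewrite ltr_pM2l // ltr_pM2r // ltr_nat.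
rewrite eqn_leq -ltnS -[(j <= k)%N]ltnS.
by rewrite (step_lt _ _ (lt_le_trans lok hij)) (step_lt _ _ (lt_le_trans loj hik)).
Qed.

Lemma prob_race_union (de : 'I_q -> R) (K : 'I_q -> nat) : (forall x, 0 < de x) ->
  P (\big[setU/set0]_(x < q) race_steps x (de x) (K x)) =
  (\sum_(x < q) race_sum (a x) (\sum_(y < q | y != x) M y) (de x) (K x))%:E.
Proof.
move=> de0; rewrite measure_bigsetU_ord => [||x x' _ _ [w []]].
- by rewrite -sumEFin; apply: eq_bigr => x _; exact: prob_race_steps.
- by move=> x; apply: bigsetU_measurable => k _; exact: measurable_race_event.
rewrite /race_steps -!bigcup_seq => -[k _ wk] [k' _ wk'].
have M_env y : a y <= M y <= M y by rewrite lexx a_le_M.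
have step_ge0 (n : nat) y : 0 <= n%:R * de y by rewrite mulr_ge0 // ltW.
have := GumbelTrick_race_event M (step_ge0 k' x') M_env wk'.
by rewrite (GumbelTrick_race_event M (step_ge0 k x) M_env wk) => -[].
Qed.

Lemma prob_GumbelTrick_disagree_le {m : nat} {mu : 'I_m -> 'I_q -> R} :
  (forall i x, a x <= mu i x <= M x) ->
  (P [set w | exists i j, GumbelTrick (mu i) (r^~ w) <> GumbelTrick (mu j) (r^~ w)]
   <= (1 - (\sum_(x < q) a x) / (\sum_(x < q) M x))%:E)%E.
Proof.
move=> mu_env; set D := [set w | _]; set s := \sum_(x < q) M x.
pose c x := \sum_(y < q | y != x) M y.
apply/lee_addgt0Pr => e e0; pose eps := e / q.+1%:R.
have eps0 : 0 < eps by rewrite divr_gt0.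
have /choice[deK deK_spec] : forall x, exists p : R * nat, 0 < p.1 /\
    a x / (a x + c x) - eps <= race_sum (a x) (c x) p.1 p.2.
  move=> x; have c0 : 0 <= c x by apply: sumr_ge0 => y _; exact: M_ge0.
  by have [de [K]] := race_sum_approx _ _ _ (a_ge0 x) c0 eps0; exists (de, K).
set U := \big[setU/set0]_(x < q) race_steps x (deK x).1 (deK x).2.
have mU : measurable U.
  apply: bigsetU_measurable => x _; apply: bigsetU_measurable => k _.
  exact: measurable_race_event.
have DU : D `<=` ~` U.
  move=> w [i [j ij]]; rewrite /U -bigcup_seq => -[x _].
  rewrite /race_steps -bigcup_seq => -[k _ wk]; apply: ij.
  have k_ge0 : 0 <= k%:R * (deK x).1 by rewrite mulr_ge0 // ltW // (deK_spec x).1.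
  by rewrite !(GumbelTrick_race_event _ k_ge0 _ wk).
have PD : (P D <= P (~` U))%E.
  apply: le_measure DU; rewrite inE; last exact: measurableC.
  exact: (measurable_GumbelTrick_disagree (r := r) mr).
rewrite probability_setC // prob_race_union in PD => [|x]; last exact: (deK_spec x).1.
move: PD; rewrite -EFinB => /le_trans; apply; rewrite -EFinD lee_fin.
have div_le x : a x / s <= a x / (a x + c x).
  have [-> | ax_neq0] := eqVneq (a x) 0; first by rewrite !mul0r.
  have ax0 : 0 < a x by rewrite lt0r ax_neq0 a_ge0.
  have c0 : 0 <= c x by apply: sumr_ge0 => y _; exact: M_ge0.
  rewrite ler_pM2l // lef_pV2 ?posrE ?ltr_wpDr //; last first.
    by rewrite /s (bigD1 x) //= ltr_wpDr // (lt_le_trans ax0).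
  by rewrite /s (bigD1 x) //= lerD2r.
have q_eps : eps *+ q <= e.
  rewrite /eps -mulr_natr -mulrA ler_piMr ?(ltW e0) // mulrC.
  by rewrite ler_pdivrMr ?ltr0Sn // mul1r ler_nat.
have : \sum_(x < q) (a x / (a x + c x) - eps) <=
    \sum_(x < q) race_sum (a x) (\sum_(y < q | y != x) M y) (deK x).1 (deK x).2.
  by apply: ler_sum => x _; exact: (deK_spec x).2.
have : \sum_(x < q) a x / s <= \sum_(x < q) a x / (a x + c x).
  by apply: ler_sum => x _; exact: div_le.
rewrite sumrB sumr_const card_ord -mulr_suml; lra.
Qed.

End race.

Theorem lemma2p10 (R : realType) (d : measure_display) (Omega : measurableType d)
  (P : probability Omega R) (m q : nat) (hm : (0 < m)%N) (hq : (0 < q)%N)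
  (r : 'I_q -> Omega -> R)
  (r_exp : forall x, has_exponential_law P 1 (r x))
  (r_indep : mutually_independent P r)
  (mu : 'I_m -> 'I_q -> R)
  (mu_simplex : forall i, in_simplex (mu i)) :
  (P [set w | exists i j : 'I_m,
        GumbelTrick (mu i) (fun x => r x w) <> GumbelTrick (mu j) (fun x => r x w)]
  <= ((\sum_(x < q) (\big[Num.max/0]_(i < m) mu i x - \big[Num.min/1]_(i < m) mu i x))
      / (\sum_(x < q) \big[Num.max/0]_(i < m) mu i x))%:E)%E.
Proof.
set M := fun x => \big[Num.max/0]_(i < m) mu i x.
set A := fun x => \big[Num.min/1]_(i < m) mu i x.
have mu_env i x : A x <= mu i x <= M x by rewrite bigmin_le // le_bigmax.
have A_ge0 x : 0 <= A x.
  by apply: le_bigmin => // i _; exact: (mu_simplex i).1.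
pose i0 := Ordinal hm.
have A_le_M x : A x <= M x by have /andP[] := mu_env i0 x; exact: le_trans.
have sumM_ge1 : 1 <= \sum_(x < q) M x.
  by rewrite -(mu_simplex i0).2; apply: ler_sum => x _; have /andP[] := mu_env i0 x.
rewrite sumrB mulrBl divff ?gt_eqF ?(lt_le_trans ltr01) //.
exact: (prob_GumbelTrick_disagree_le r_exp r_indep A_ge0 A_le_M mu_env).
Qed.
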